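(* Let $H$ be a graph (possibly with loops) on $n$ vertices. Then for any integer $c\geq 2n$, the independence number of the exponential graph satisfies $\alpha(\mathcal{E}_c(H))\leq n c^{n-1}$.
   Context: For a finite graph $H$ (no multiple edges, loops allowed) and integer $c\ge 1$, two maps $\phi_1,\phi_2:V(H)\to[c]$ are co-proper if $\phi_1(u)\ne\phi_2(v)$ whenever $u\sim v$ in $H$. The exponential graph $\mathcal{E}_c(H)$ has vertex set $[c]^{V(H)}$, with $\phi_1\sim\phi_2$ iff they are co-proper. An independent set is a set of vertices no two distinct members of which are adjacent; $\alpha$ is the maximum size of an independent set. *)

From mathcomp Require Import all_boot.
Set Implicit Arguments. Unset Strict Implicit. Unset Printing Implicit Defensive.

(* A graph H (no multiple edges, loops allowed) is a finite vertex type V with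
   a symmetric adjacency relation e : rel V (e u u allowed = loop at u). *)

Definition coproper (V : finType) (e : rel V) (c : nat)
  (phi1 phi2 : {ffun V -> 'I_c}) : bool :=
  [forall u, forall v, e u v ==> (phi1 u != phi2 v)].

Definition exp_adj (V : finType) (e : rel V) (c : nat) : rel {ffun V -> 'I_c} :=
  fun phi1 phi2 => coproper e phi1 phi2.

Definition exp_independent (V : finType) (e : rel V) (c : nat)
  (S : {set {ffun V -> 'I_c}}) : bool :=
  [forall x in S, forall y in S, (x != y) ==> ~~ exp_adj e x y].

(* Distinct members of an independent set of E_c(H) use a common colour, and
   nothing else about independence (nor the symmetry of the edge relation) is
   needed.  Split such an intersecting family S according to the number j of
   colours used.  For 2j <= c we follow Katona's circle proof of the
   Erdos-Ko-Rado theorem: view the colours as Z/c; at most j of the c rotations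
   of a colouring whose image is an arc of length j can lie in S, so S contains
   at most a fraction j/c of these arc colourings.  Averaging over all
   permutations of the colours, which act transitively on j-sets of colours,
   gives c |S_j| <= j |Omega_j|, where Omega_j is the set of all colourings
   using exactly j colours.  Summing over j <= n gives c |S| <= n c^n. *)

From mathcomp Require Import all_boot fingroup perm ssralg zmodp zify.
Set Implicit Arguments. Unset Strict Implicit. Unset Printing Implicit Defensive.
Import GRing.Theory.

Lemma exchange_card_sum (I J : finType) (B : {pred J}) (R : I -> J -> bool) :
  \sum_i #|[set j in B | R i j]| = \sum_(j in B) #|[set i | R i j]|.
Proof.
under eq_bigr => i _ do rewrite -sum1dep_card.
under [RHS]eq_bigr => j _ do rewrite -sum1dep_card.
rewrite (exchange_big_dep (mem B)) /=; last by move=> i j _ /andP [].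
by apply: eq_bigr => j jB; apply: eq_bigl => i; rewrite jB.
Qed.

Lemma exists_perm_imset (T : finType) (A B : {set T}) :
  #|A| = #|B| -> exists t : {perm T}, t @: A = B.
Proof.
move=> hAB.
pose s := enum A ++ enum (~: A); pose u := enum B ++ enum (~: B).
have size_s : size s = #|T| by rewrite size_cat -!cardE cardsC.
have size_u : size u = #|T| by rewrite size_cat -!cardE cardsC.
have uniq_u : uniq u.
  rewrite cat_uniq !enum_uniq /= andbT; apply/hasPn => x.
  by rewrite mem_enum inE => xB; rewrite /= mem_enum.
have mem_s x : x \in s by rewrite mem_cat !mem_enum inE orbN.
pose f x := nth x u (index x s).
have f_inj : injective f.
  move=> x y; rewrite /f (set_nth_default y); last by rewrite size_u -size_s index_mem.
  move/eqP; rewrite nth_uniq ?size_u -?size_s ?index_mem //.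
  by move/eqP => exy; rewrite -(nth_index x (mem_s x)) exy nth_index.
exists (perm f_inj); apply/eqP.
rewrite eqEcard card_imset ?hAB ?leqnn ?andbT //; last exact: perm_inj.
apply/subsetP => y /imsetP [x xA ->]; rewrite permE /f /s index_cat mem_enum xA.
have x_idx : index x (enum A) < #|B| by rewrite -hAB cardE index_mem mem_enum.
by rewrite /u nth_cat -cardE x_idx -(mem_enum B) mem_nth // -cardE.
Qed.

Lemma card_perm_imset_pred (T : finType) (P : pred {set T}) (A B : {set T}) :
  #|A| = #|B| ->
  #|[set s : {perm T} | P (s @: A)]| = #|[set s : {perm T} | P (s @: B)]|.
Proof.
move=> /exists_perm_imset [t tAB].
have imsetM (s1 s2 : {perm T}) (X : {set T}) : (s1 * s2)%g @: X = s2 @: (s1 @: X).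
  by rewrite -imset_comp; apply: eq_imset => x; rewrite /= permM.
rewrite -(card_imset _ (mulgI t^-1%g)); apply: eq_card => s; rewrite inE.
apply/imsetP/idP => [[s' ] | Ps].
  by rewrite inE -tAB -imsetM => Ps' ->; rewrite mulKVg.
by exists (t * s)%g; rewrite ?mulKg // inE imsetM tAB.
Qed.

Section Circle.
Variables (c r : nat).
Local Notation C := 'I_c.+1.

Lemma val_subZp (x y : C) : val (x - y)%R = if y <= x then x - y else c.+1 + x - y.
Proof.
have [xc yc] := (ltn_ord x, ltn_ord y); rewrite /= modnDmr.
case: leqP => yx; last by rewrite modn_small; lia.
by rewrite addnBA 1?ltnW // addnC -addnBA // modnDl modn_small //; lia.
Qed.

Definition arc (a : C) : {set C} := [set x : C | val (x - a)%R < r].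

Definition close (x y : C) : bool := (val (x - y)%R < r) || (val (y - x)%R < r).

Lemma closeDr k x y : close (x + k)%R (y + k)%R = close x y.
Proof.
have subDr u v : (u + k - (v + k) = u - v)%R by rewrite opprD addrACA subrr addr0.
by rewrite /close !subDr.
Qed.

Lemma close_small (p q : C) : p < r -> q < r -> close p q.
Proof.
rewrite /close !val_subZp => hp hq; apply/orP.
by case: (leqP q p) => h; [left | right; rewrite (ltnW h)]; lia.
Qed.

Lemma arc_close a x y : x \in arc a -> y \in arc a -> close x y.
Proof. by rewrite !inE -(closeDr (- a)%R); apply: close_small. Qed.

Lemma arc_translate (a k : C) : [set (x + k)%R | x : C in arc a] = arc (a + k)%R.
Proof.
rewrite (can_imset_pre _ (addrK k)); apply/setP => x.
by rewrite !inE opprD addrA addrAC.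
Qed.

Lemma card_arc a : r <= c.+1 -> #|arc a| = r.
Proof.
move=> rc; rewrite -[a]add0r -arc_translate card_imset; last exact: addIr.
have -> : arc 0%R = [set widen_ord rc i | i : 'I_r].
  apply/setP => x; rewrite inE subr0; apply/idP/imsetP => [xr | [i _ ->]].
    by exists (Ordinal xr) => //; apply: val_inj.
  exact: (ltn_ord i).
rewrite card_imset ?card_ord // => i j ij; apply: val_inj; exact: (congr1 val ij).
Qed.

Lemma val_inZp_small m : m < c.+1 -> val (inZp m : C) = m.
Proof. exact: modn_small. Qed.

Hypotheses (r_gt0 : 0 < r) (r_half : r + r <= c.+1).

Lemma not_close_addr k : ~~ close (k + inZp r)%R k.
Proof.
rewrite /close addrAC subrr add0r opprD addrA subrr add0r.
rewrite -[(- _)%R]add0r val_subZp !val_inZp_small; try lia.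
by rewrite ltnn leqn0 (negbTE (lt0n_neq0 r_gt0)); lia.
Qed.

Lemma addr_in_arc k0 k :
  close k k0 -> k \notin arc k0 -> (k + inZp r)%R \in arc k0.
Proof.
rewrite /close !inE => /orP [-> //| close0 far].
have : (k0 - k)%R != 0%R.
  by rewrite subr_eq0; apply: contraNneq far => ->; rewrite subrr.
have -> : (k + inZp r - k0 = inZp r - (k0 - k))%R by rewrite opprB addrAC addrC.
move: close0; rewrite -val_eqE; move: (k0 - k)%R => q.
rewrite val_subZp val_inZp_small; last by lia.
by case: ifP => /=; lia.
Qed.

Lemma card_pairwise_close (K : {set C}) :
  {in K &, forall k1 k2, k1 != k2 -> close k1 k2} -> #|K| <= r.
Proof.
move=> closeK; have [-> | [k0 k0K]] := set_0Vmem K; first by rewrite cards0.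
(* Katona: every other k in K lies less than r steps before or after k0, and
   moving the ones before k0 forward by r maps K injectively into arc k0. *)
pose fold k := if k \in arc k0 then k else (k + inZp r)%R.
have fold_arc : {in K, forall k, fold k \in arc k0}.
  move=> k kK; rewrite /fold; case: ifPn => // kN.
  have k_neq : k != k0 by apply: contraNneq kN => ->; rewrite inE subrr.
  by apply: addr_in_arc kN; apply: closeK.
have fold_inj : {in K &, injective fold}.
  move=> k1 k2 h1 h2; rewrite /fold.
  have far k k' : k \in K -> k' \in K -> k = (k' + inZp r)%R -> k = k'.
    move=> kK k'K e; apply/eqP; apply: contraNT (not_close_addr k') => ne.
    by rewrite -e; exact: closeK.
  case: ifP => _; case: ifP => _ //; first exact: far.
    by move/esym/(far _ _ h2 h1).
  exact: addIr.
rewrite -(card_in_imset fold_inj) -(card_arc k0 (leq_trans (leq_addl r r) r_half)).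
by apply/subset_leq_card/subsetP => _ /imsetP [k kK ->]; exact: fold_arc.
Qed.

End Circle.

Section Colourings.
Variables (V C : finType).

Definition img (f : {ffun V -> C}) : {set C} := [set f v | v : V].

Definition intersecting (T : {set {ffun V -> C}}) : Prop :=
  {in T &, forall f g : {ffun V -> C}, f != g -> exists u v, f u = g v}.

Definition layer (X : {set {ffun V -> C}}) (j : nat) : {set {ffun V -> C}} :=
  [set f in X | #|img f| == j].

Lemma card_layers (X : {set {ffun V -> C}}) :
  #|X| = \sum_(j < #|V|.+1) #|layer X j|.
Proof.
rewrite -sum1_card.
rewrite (partition_big (fun f => inord #|img f| : 'I_#|V|.+1) predT) //=.
apply: eq_bigr => j _; rewrite sum1dep_card; apply: eq_card => f; rewrite !inE.
have imgV : #|img f| < #|V|.+1 by rewrite ltnS; exact: leq_imset_card.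
by rewrite -val_eqE /= inordK.
Qed.

Definition relabel (s : {perm C}) (f : {ffun V -> C}) : {ffun V -> C} :=
  [ffun v => s (f v)].

Lemma img_relabel s f : img (relabel s f) = s @: img f.
Proof. by rewrite /img -imset_comp; apply: eq_imset => v; rewrite ffunE. Qed.

Lemma relabelK s : cancel (relabel s) (relabel s^-1).
Proof. by move=> f; apply/ffunP => v; rewrite !ffunE permK. Qed.

Lemma relabelKV s : cancel (relabel s^-1) (relabel s).
Proof. by move=> f; apply/ffunP => v; rewrite !ffunE permKV. Qed.

Lemma relabel_inj s : injective (relabel s).
Proof. exact: can_inj (relabelK s). Qed.

Lemma intersecting_relabel s T : intersecting T -> intersecting (relabel s @: T).
Proof.
move=> hT _ _ /imsetP [f fT ->] /imsetP [g gT ->] ne.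
have [|u [v e]] := hT f g fT gT; first by apply: contraNneq ne => ->.
by exists u, v; rewrite !ffunE e.
Qed.

End Colourings.

Section ArcColourings.
Variables (c r : nat) (V : finType).
Hypotheses (r_gt0 : 0 < r) (r_half : r + r <= c.+1).
Local Notation C := 'I_c.+1.
Local Notation colouring := {ffun V -> C}.

Let r_le : r <= c.+1. Proof. exact: leq_trans (leq_addl r r) r_half. Qed.

Definition is_arc (A : {set C}) : bool := [exists a, A == arc r a].

Definition arc_colourings : {set colouring} := [set f | is_arc (img f)].

Definition rot (k : C) (f : colouring) : colouring := [ffun v => (f v + k)%R].

Lemma rotK k : cancel (rot k) (rot (- k)%R).
Proof. by move=> f; apply/ffunP => v; rewrite !ffunE addrK. Qed.

Lemma rotKV k : cancel (rot (- k)%R) (rot k).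
Proof. by move=> f; apply/ffunP => v; rewrite !ffunE subrK. Qed.

Lemma rot_arc_colourings k f :
  (rot k f \in arc_colourings) = (f \in arc_colourings).
Proof.
suff rot_arc k' g : g \in arc_colourings -> rot k' g \in arc_colourings.
  by apply/idP/idP => [/(rot_arc (- k)%R) | /rot_arc //]; rewrite rotK.
rewrite !inE => /existsP [a /eqP imga]; apply/existsP; exists (a + k')%R.
rewrite -arc_translate -imga /img -imset_comp.
by apply/eqP/eq_imset => v; rewrite /= ffunE.
Qed.

Lemma card_rotations_in (T : {set colouring}) f :
  intersecting T -> f \in arc_colourings -> #|[set k | rot k f \in T]| <= r.
Proof.
rewrite inE => hT /existsP [a /eqP imga]; apply: card_pairwise_close => // k1 k2.
rewrite !inE => T1 T2 k12.
have /imsetP [u0 _ _] : a \in img f by rewrite imga inE subrr.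
have [|u [v]] := hT _ _ T1 T2.
  by apply: contraNneq k12 => /ffunP /(_ u0); rewrite !ffunE => /addrI ->.
rewrite !ffunE => e.
rewrite -(closeDr _ (f u)) [(k1 + f u)%R]addrC e [(k2 + f u)%R]addrC closeDr.
have in_arc w : f w \in arc r a by rewrite -imga; apply: imset_f.
exact: arc_close (in_arc v) (in_arc u).
Qed.

Lemma card_intersecting_arc_colourings (T : {set colouring}) :
  intersecting T -> c.+1 * #|T :&: arc_colourings| <= r * #|arc_colourings|.
Proof.
move=> hT.
have rot_shift k :
    #|T :&: arc_colourings| <= #|[set f in arc_colourings | rot k f \in T]|.
  rewrite -(card_imset _ (can_inj (rotKV k))); apply/subset_leq_card/subsetP.
  move=> _ /imsetP [g /setIP [gT gA] ->].
  by rewrite in_set rot_arc_colourings gA rotKV.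
have -> : c.+1 * #|T :&: arc_colourings| = \sum_(k : C) #|T :&: arc_colourings|.
  by rewrite sum_nat_const card_ord.
rewrite mulnC -sum_nat_const.
apply: (@leq_trans (\sum_(k : C) #|[set f in arc_colourings | rot k f \in T]|)).
  by apply: leq_sum => k _; exact: rot_shift.
by rewrite exchange_card_sum; apply: leq_sum => f fA; exact: card_rotations_in.
Qed.

Lemma card_img_arc_colouring f : f \in arc_colourings -> #|img f| = r.
Proof. by rewrite inE => /existsP [a /eqP ->]; rewrite card_arc. Qed.

Definition arc_relabellings (A : {set C}) : {set {perm C}} :=
  [set s : {perm C} | is_arc (s @: A)].

Lemma card_relabel_arc f : #|img f| = r ->
  #|[set s | relabel s f \in arc_colourings]| = #|arc_relabellings (arc r 0%R)|.
Proof.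
move=> imgf; rewrite -(card_perm_imset_pred is_arc (_ : #|img f| = _)).
  by apply: eq_card => s; rewrite !inE img_relabel.
by rewrite card_arc.
Qed.

Lemma arc_relabellings_gt0 : 0 < #|arc_relabellings (arc r 0%R)|.
Proof.
by apply/card_gt0P; exists 1%g; rewrite inE imset_perm1; apply/existsP; exists 0%R.
Qed.

Lemma sum_card_relabel_arc (X : {set colouring}) :
  X \subset layer [set: colouring] r ->
  \sum_(s : {perm C}) #|[set f in X | relabel s f \in arc_colourings]| =
  #|X| * #|arc_relabellings (arc r 0%R)|.
Proof.
move=> Xr; rewrite exchange_card_sum -sum_nat_const.
apply: eq_bigr => f fX; apply: card_relabel_arc.
by move/subsetP: Xr => /(_ f fX); rewrite inE => /andP [_ /eqP].
Qed.

Lemma card_layer_intersecting (S : {set colouring}) :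
  intersecting S -> c.+1 * #|layer S r| <= r * #|layer [set: colouring] r|.
Proof.
move=> hS.
have Sr : layer S r \subset layer [set: colouring] r.
  by apply/subsetP => f; rewrite !inE => /andP [_ ->].
rewrite -(leq_pmul2r arc_relabellings_gt0) -!mulnA -!sum_card_relabel_arc //.
rewrite !big_distrr; apply: leq_sum => s _ /=.
have into_arcs : #|[set f in layer S r | relabel s f \in arc_colourings]| <=
    #|relabel s @: S :&: arc_colourings|.
  set A := [set f in layer S r | _].
  rewrite -(card_imset A (@relabel_inj _ _ s)); apply/subset_leq_card/subsetP.
  move=> _ /imsetP [f + ->]; rewrite inE => /andP [fSr fA].
  by rewrite inE fA andbT imset_f //; move: fSr; rewrite inE => /andP [].
have from_arcs : #|arc_colourings| <=
    #|[set f in layer [set: colouring] r | relabel s f \in arc_colourings]|.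
  rewrite -(card_imset arc_colourings (@relabel_inj _ _ s^-1)).
  apply/subset_leq_card/subsetP => _ /imsetP [f fA ->].
  rewrite in_set relabelKV fA andbT inE img_relabel card_imset; last exact: perm_inj.
  by rewrite (card_img_arc_colouring fA) eqxx andbT inE.
apply: (leq_trans (leq_mul (leqnn c.+1) into_arcs)).
have relabel_hS := intersecting_relabel (s := s) hS.
apply: (leq_trans (card_intersecting_arc_colourings relabel_hS)).
by rewrite leq_mul2l from_arcs orbT.
Qed.

End ArcColourings.

Theorem card_intersecting (c : nat) (V : finType) (S : {set {ffun V -> 'I_c.+1}}) :
  0 < #|V| -> #|V| + #|V| <= c.+1 -> intersecting S ->
  c.+1 * #|S| <= #|V| * c.+1 ^ #|V|.
Proof.
move=> V_gt0 V_half hS.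
have layer0 : layer S 0 = set0.
  apply/setP => f; rewrite !inE cards_eq0; have [v _] := card_gt0P V_gt0.
  suff /set0Pn/negbTE -> : exists x, x \in img f by rewrite andbF.
  by exists (f v); apply: imset_f.
have -> : c.+1 ^ #|V| = #|[set: {ffun V -> 'I_c.+1}]|.
  by rewrite cardsT card_ffun card_ord.
rewrite (card_layers S) (card_layers [set: _]) !big_distrr; apply: leq_sum => j _.
have [-> | j_gt0] := posnP j; first by rewrite layer0 cards0 /= muln0.
have jV : j <= #|V| by rewrite -ltnS.
apply: leq_trans (card_layer_intersecting j_gt0 _ hS) _; first by lia.
by rewrite leq_mul2r jV orbT.
Qed.

Lemma exp_independent_intersecting (V : finType) (e : rel V) (c : nat)
    (S : {set {ffun V -> 'I_c}}) :
  exp_independent e S -> intersecting S.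
Proof.
move=> indS f g fS gS fg.
move/forall_inP: indS => /(_ f fS) /forall_inP /(_ g gS) /implyP /(_ fg).
rewrite /exp_adj /coproper negb_forall => /existsP [u].
rewrite negb_forall => /existsP [v].
by rewrite negb_imply negbK => /andP [_ /eqP fu_gv]; exists u, v.
Qed.

Theorem lemma4 (V : finType) (e : rel V) (he : symmetric e) (c : nat)
  (hn : 0 < #|V|) (hc : 2 * #|V| <= c) (S : {set {ffun V -> 'I_c}}) :
  exp_independent e S -> #|S| <= #|V| * c ^ (#|V|).-1.
Proof.
move=> /exp_independent_intersecting hS.
case: c hc S hS => [|c] hc S hS; first by lia.
rewrite -(leq_pmul2l (ltn0Sn c)) mulnCA -expnS prednK //.
by apply: card_intersecting; rewrite // addnn -mul2n.
Qed.
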